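(* Let $a$ and $b$ be positive integers. There exists a graph $G$ with $\gamma^{LD}(G)=a$ and $\gamma^{DLD}(G)=b$ if and only if $$0\le b-a\le 2^a-1-\binom{a}{\lceil a/2\rceil}.$$
   Context: Graphs are finite, simple and undirected, and need not be connected. For a vertex $u$, $N(u)$ is its set of neighbours and $N[u]=N(u)\cup\{u\}$. A code is a non-empty subset $C$ of the vertex set $V$; $I(C;u)=N[u]\cap C$. A code $C$ is locating-dominating if for all distinct $u,v\in V\setminus C$ we have $I(C;u)\neq\emptyset$ and $I(C;u)\ne I(C;v)$. A code $C$ is solid-locating-dominating if $I(C;u)\ne\emptyset$ for every $u\in V\setminus C$ and $I(C;u)\not\subseteq I(C;v)$ for all distinct $u,v\in V\setminus C$. $\gamma^{LD}(G)$ and $\gamma^{DLD}(G)$ are the minimum sizes of a locating-dominating and a solid-locating-dominating code in $G$. *)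

(* A finite simple undirected graph is a finType T with a
   symmetric irreflexive edge relation e : rel T. *)
From mathcomp Require Import all_boot.
Set Implicit Arguments. Unset Strict Implicit. Unset Printing Implicit Defensive.

Section Codes.
Variables (T : finType) (e : rel T).

Definition cnbhd (u : T) : {set T} := [set v | e u v] :|: [set u].

Definition Iset (C : {set T}) (u : T) : {set T} := cnbhd u :&: C.

Definition is_LD (C : {set T}) : bool :=
  [&& C != set0,
      [forall u, (u \notin C) ==> (Iset C u != set0)] &
      [forall u, forall v,
         [&& u \notin C, v \notin C & u != v] ==> (Iset C u != Iset C v)]].

Definition is_DLD (C : {set T}) : bool :=
  [&& C != set0,
      [forall u, (u \notin C) ==> (Iset C u != set0)] &
      [forall u, forall v,
         [&& u \notin C, v \notin C & u != v] ==> ~~ (Iset C u \subset Iset C v)]].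

(* minimum size of a code with the property; V itself is always such a code
   when V is nonempty, so #|T| is a harmless default for the min *)
Definition gammaLD : nat :=
  \big[minn/#|T|]_(C : {set T} | is_LD C) #|C|.

Definition gammaDLD : nat :=
  \big[minn/#|T|]_(C : {set T} | is_DLD C) #|C|.

End Codes.

(* A solid-locating-dominating code is locating-dominating, so a <= b.  If C is a
   minimum locating-dominating code, the vertices outside C have pairwise distinct
   nonempty traces I(C;u).  Adding to C those whose trace does not have size
   ceil(a/2) leaves outside only vertices whose traces have equal size, hence are
   pairwise incomparable: this is a solid-locating-dominating code with at most
   a + 2^a - 1 - C(a, ceil(a/2)) vertices.

   Conversely, let F be a family of nonempty subsets of {0..a-1} containing all
   singletons, and take a clique on {0..a-1} plus one vertex per X in F adjacent
   to the elements of X.  The clique is an optimal locating-dominating code.  The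
   vertices outside a solid-locating-dominating code either lie in the clique or
   form an antichain of F, so gamma^DLD = a + |F| - w, where w >= a is the width
   of F.  Adding pairs through a fixed point to the singletons keeps w = a and
   realizes b - a < a; adding the middle layer and further sets gives
   w = C(a, ceil(a/2)) by Sperner's theorem and realizes the remaining values. *)

From HB Require Import structures.
From mathcomp Require Import all_boot.
From mathcomp Require Import all_fingroup zify.
Set Implicit Arguments. Unset Strict Implicit. Unset Printing Implicit Defensive.

Definition antichain (T : finType) (A : {set {set T}}) : Prop :=
  {in A &, forall S S' : {set T}, S \subset S' -> S = S'}.

Lemma exists_perm_imset (T : finType) (A B : {set T}) :
  #|A| = #|B| -> exists s : {perm T}, s @: A = B.
Proof.
move: {2}#|A :\: B| (erefl #|A :\: B|) => k; elim: k A => [|k IH] A hk hAB.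
  exists 1%g; rewrite (eq_imset _ (@perm1 T)) imset_id.
  by apply/eqP; rewrite eqEcard -setD_eq0 -cards_eq0 hk hAB leqnn.
have /set0Pn [x] : A :\: B != set0 by rewrite -card_gt0 hk.
rewrite inE => /andP [xB xA].
have /set0Pn [y] : B :\: A != set0.
  by rewrite -card_gt0; move: hk; rewrite !cardsD hAB setIC; lia.
rewrite inE => /andP [yA yB].
have txA : (tperm x y @: A) :\: B = (A :\: B) :\ x.
  apply/setP=> z; rewrite !inE; apply/andP/and3P => [[zB /imsetP [w wA zE]]|[zx zB zA]].
    move: zB; rewrite {}zE; case: tpermP => [wx|wy|xw _] zB; first by rewrite yB in zB.
      by rewrite -wy wA in yA.
    by split=> //; apply/eqP.
  split=> //; apply/imsetP; exists z => //; rewrite tpermD // eq_sym //.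
  by apply: contraNneq zB => ->.
have [s hs] : exists s : {perm T}, s @: (tperm x y @: A) = B.
  apply: IH; last by rewrite card_imset //; exact: perm_inj.
  by move: hk; rewrite txA (cardsD1 x (A :\: B)) !inE xB xA => -[].
by exists (tperm x y * s)%g; rewrite -hs -imset_comp; apply: eq_imset => z; rewrite permM.
Qed.

(* Lubell's argument: the prefixes of a permutation form a chain, which meets an
   antichain at most once, and every k-subset is the k-prefix of the same number
   of permutations. *)
Section Sperner.
Variable n : nat.

Definition perm_prefix (s : 'S_n) (j : nat) : {set 'I_n} := s @: [set i : 'I_n | i < j].

Definition nprefix (A : {set 'I_n}) : nat := #|[set s : 'S_n | perm_prefix s #|A| == A]|.

Lemma card_ord_lt j : j <= n -> #|[set i : 'I_n | i < j]| = j.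
Proof.
move=> hj; have inj : injective (widen_ord hj) by move=> x y [] /val_inj.
rewrite -[RHS](card_ord j) -cardsT -(card_imset _ inj).
apply: eq_card => i; rewrite inE; apply/idP/imsetP => [ij|[k _ ->]]; last exact: (ltn_ord k).
by exists (Ordinal ij); rewrite ?inE //; apply: val_inj.
Qed.

Lemma card_perm_prefix (s : 'S_n) j : j <= n -> #|perm_prefix s j| = j.
Proof. by move=> hj; rewrite card_imset ?card_ord_lt //; exact: perm_inj. Qed.

Lemma perm_prefixS (s : 'S_n) j j' : j <= j' -> perm_prefix s j \subset perm_prefix s j'.
Proof.
move=> hj; apply: imsetS; apply/subsetP => i; rewrite !inE => h.
exact: leq_trans h hj.
Qed.

Lemma nprefixE (A : {set 'I_n}) : nprefix A = \sum_(s : 'S_n | perm_prefix s #|A| == A) 1.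
Proof. by rewrite sum1_card /nprefix cardsE. Qed.

Lemma nprefix_le (A B : {set 'I_n}) : #|A| = #|B| -> nprefix A <= nprefix B.
Proof.
move=> hAB; have [t htA] := exists_perm_imset hAB.
rewrite /nprefix -(card_imset _ (mulIg t)) -hAB; set j := #|A|.
apply/subset_leq_card/subsetP => u /imsetP [s]; rewrite !inE => /eqP hs ->.
by rewrite -htA -hs /perm_prefix -imset_comp; apply/eqP/eq_imset => i; rewrite permM.
Qed.

Lemma nprefix_sum j : j <= n -> \sum_(B : {set 'I_n} | #|B| == j) nprefix B = n`!.
Proof.
move=> hj; rewrite -card_Sn -sum1_card.
rewrite (eq_bigr (fun B => \sum_(s : 'S_n | perm_prefix s j == B) 1)); last first.
  by move=> B /eqP hB; rewrite nprefixE hB.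
rewrite (exchange_big_dep xpredT) //=; apply: eq_bigr => s _.
rewrite (big_pred1 (perm_prefix s j)) // => B /=.
by rewrite eq_sym andb_idl // => /eqP <-; rewrite card_perm_prefix.
Qed.

Lemma nprefix_mul_bin (A : {set 'I_n}) : nprefix A * 'C(n, #|A|) = n`!.
Proof.
have hA : #|A| <= n by rewrite -[X in _ <= X]card_ord max_card.
rewrite -(nprefix_sum hA) (eq_bigr (fun _ => nprefix A)); last first.
  by move=> B /eqP hB; apply/eqP; rewrite eqn_leq !nprefix_le.
by rewrite sum_nat_const mulnC -[X in 'C(X, _)]card_ord -card_draws cardsE.
Qed.

Lemma lym (Ac : {set {set 'I_n}}) : antichain Ac -> \sum_(A in Ac) nprefix A <= n`!.
Proof.
move=> anti; rewrite -card_Sn -sum1_card.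
under eq_bigr => A _ do rewrite nprefixE.
rewrite (exchange_big_dep xpredT) //=; apply: leq_sum => s _.
rewrite sum1_card; apply/card_le1_eqP => A B; rewrite !unfold_in /=.
move=> /andP [Ac_A /eqP hA] /andP [Ac_B /eqP hB].
have [leAB|/ltnW leBA] := leqP #|A| #|B|.
  by apply/esym/anti; rewrite // -hA -hB perm_prefixS.
by apply: anti; rewrite // -hA -hB perm_prefixS.
Qed.

Lemma bin_uphalf_le_succ i : i < uphalf n -> 'C(n, i) <= 'C(n, i.+1).
Proof.
rewrite geq_uphalf_double => hi.
by rewrite -(leq_pmul2l (ltn0Sn i)) mul_bin_left leq_mul2r; apply/orP; right; lia.
Qed.

Lemma leq_bin_uphalf j : 'C(n, j) <= 'C(n, uphalf n).
Proof.
have mono : {in [pred i | i <= uphalf n] &, {homo binomial n : i j / i <= j}}.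
  apply: homo_leq_in => [//|y x z|i l _|i _]; first exact: leq_trans.
    by rewrite !inE => hl k /andP [_ /ltnW hk]; apply: leq_trans hk hl.
  by rewrite !inE; exact: bin_uphalf_le_succ.
have [hj|hj] := leqP j (uphalf n); first by apply: mono; rewrite ?inE.
have [hjn|/bin_small -> //] := leqP j n.
by rewrite -bin_sub //; apply: mono; rewrite ?inE //; move: hj; rewrite uphalf_half; lia.
Qed.

Theorem sperner (Ac : {set {set 'I_n}}) : antichain Ac -> #|Ac| <= 'C(n, uphalf n).
Proof.
move=> /lym lymAc; rewrite -(leq_pmul2r (fact_gt0 n)).
apply: (@leq_trans ((\sum_(A in Ac) nprefix A) * 'C(n, uphalf n))).
  rewrite -sum1_card !big_distrl /= leq_sum // => A _.
  by rewrite mul1n -(nprefix_mul_bin A) leq_mul2l leq_bin_uphalf orbT.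
by rewrite [leqRHS]mulnC leq_mul2r lymAc orbT.
Qed.

End Sperner.

HB.instance Definition _ := SemiGroup.isComLaw.Build nat minn minnA minnC.

Section MinCard.
Variables (T : finType) (P : pred {set T}).
Local Notation mincard := (\big[minn/#|T|]_(C | P C) #|C|).

Lemma mincard_le C : P C -> mincard <= #|C|.
Proof. by move=> PC; rewrite (bigD1 C) //= geq_minl. Qed.

Lemma mincard_le_card : mincard <= #|T|.
Proof.
elim/big_ind: _ => // [m p hm _|C _]; first exact: leq_trans (geq_minl m p) hm.
exact: max_card.
Qed.

Lemma mincard_ge m : m <= #|T| -> (forall C, P C -> m <= #|C|) -> m <= mincard.
Proof. by move=> hT hP; elim/big_ind: _ => // p q hp hq; rewrite leq_min hp hq. Qed.

Lemma mincard_attained C0 : P C0 -> exists2 C, P C & mincard = #|C|.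
Proof.
move=> PC0; case: (arg_minnP (fun C : {set T} => #|C|) PC0) => C PC minC; exists C => //.
by apply/eqP; rewrite eqn_leq mincard_le // mincard_ge ?max_card.
Qed.

End MinCard.

Lemma card_nonempty_subsets_neq (T : finType) (C : {set T}) k : 0 < k ->
  #|[set S : {set T} | [&& S \subset C, S != set0 & #|S| != k]]|
    = 2 ^ #|C| - 1 - 'C(#|C|, k).
Proof.
move=> k_gt0; pose L := [set S : {set T} | #|S| == k].
have -> : [set S : {set T} | [&& S \subset C, S != set0 & #|S| != k]]
    = (powerset C :\: L) :\ set0.
  by apply/setP => S; rewrite !inE andbC -andbA.
have := cardsD1 set0 (powerset C :\: L).
rewrite !inE sub0set cards0 eq_sym (gtn_eqF k_gt0) /=.
have -> : #|powerset C :\: L| = 2 ^ #|C| - 'C(#|C|, k).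
  rewrite cardsD card_powerset -cards_draws; congr (_ - _).
  by apply: eq_card => S; rewrite !inE.
lia.
Qed.

Section Codes.
Variables (T : finType) (e : rel T).

Lemma in_Iset C u x : (x \in Iset e C u) = ((e u x) || (x == u)) && (x \in C).
Proof. by rewrite /Iset /cnbhd !inE. Qed.

Lemma is_DLD_LD C : is_DLD e C -> is_LD e C.
Proof.
case/and3P => C0 dom /forallP sep; apply/and3P; split => //.
apply/forallP => u; apply/forallP => v.
by apply/implyP => /(implyP (forallP (sep u) v)); apply: contra => /eqP ->.
Qed.

Lemma setT_DLD : 0 < #|T| -> is_DLD e setT.
Proof.
move=> hT; apply/and3P; split; first by rewrite -card_gt0 cardsT.
  by apply/forallP => u; rewrite inE.
by apply/forallP => u; apply/forallP => v; rewrite inE.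
Qed.

Lemma gammaLD_le C : is_LD e C -> gammaLD e <= #|C|.
Proof. exact: mincard_le. Qed.

Lemma gammaDLD_le C : is_DLD e C -> gammaDLD e <= #|C|.
Proof. exact: mincard_le. Qed.

Lemma gammaLD_le_gammaDLD : 0 < #|T| -> gammaLD e <= gammaDLD e.
Proof.
move=> /setT_DLD /mincard_attained [D DLD_D]; rewrite /gammaDLD => ->.
exact/gammaLD_le/is_DLD_LD.
Qed.

Definition LD_extension (C : {set T}) (k : nat) : {set T} :=
  C :|: [set u | (u \notin C) && (#|Iset e C u| != k)].

Lemma notin_LD_extension C k u :
  u \notin LD_extension C k -> u \notin C /\ #|Iset e C u| = k.
Proof. by rewrite !inE negb_or => /andP [uC]; rewrite uC negbK => /eqP. Qed.

Lemma LD_extension_DLD C k : is_LD e C -> is_DLD e (LD_extension C k).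
Proof.
case/and3P => C0 /forallP dom /forallP sep.
have sCD : C \subset LD_extension C k := subsetUl _ _.
have IsetD u : Iset e (LD_extension C k) u :&: C = Iset e C u.
  by rewrite /Iset -setIA (setIidPr sCD).
apply/and3P; split.
- by apply: contraNneq C0 => D0; rewrite -subset0 -D0.
- apply/forallP => u; apply/implyP => /notin_LD_extension [/(implyP (dom u)) IC0 _].
  by apply: contraNneq IC0 => D0; rewrite -subset0 -D0 /Iset setIS.
apply/forallP => u; apply/forallP => v; apply/implyP => /and3P [uD vD uv].
have [uC hu] := notin_LD_extension uD; have [vC hv] := notin_LD_extension vD.
apply: contra (implyP (forallP (sep u) v) (introT and3P (And3 uC vC uv))) => sub.
by rewrite eqEcard hu hv leqnn andbT -!IsetD setSI.
Qed.

Lemma card_LD_extension C k : is_LD e C -> 0 < k ->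
  #|LD_extension C k| <= #|C| + (2 ^ #|C| - 1 - 'C(#|C|, k)).
Proof.
case/and3P => _ /forallP dom /forallP sep k_gt0; apply: leq_trans (leq_card_setU _ _) _.
rewrite leq_add2l -card_nonempty_subsets_neq // -(card_in_imset (f := Iset e C)).
  apply/subset_leq_card/subsetP => S /imsetP [u]; rewrite !inE => /andP [uC hu] ->.
  by rewrite subsetIr (implyP (dom u) uC).
move=> u v; rewrite !inE => /andP [uC _] /andP [vC _] /eqP IuIv; apply: contraTeq IuIv => uv.
exact: (implyP (forallP (sep u) v) (introT and3P (And3 uC vC uv))).
Qed.

Lemma gammaDLD_le_gammaLD : 0 < gammaLD e ->
  gammaDLD e <= gammaLD e + (2 ^ gammaLD e - 1 - 'C(gammaLD e, uphalf (gammaLD e))).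
Proof.
move=> gt0; have T_gt0 : 0 < #|T| by apply: leq_trans gt0 (mincard_le_card _).
have [C LD_C gammaC] := mincard_attained (is_DLD_LD (setT_DLD T_gt0)).
rewrite /gammaLD gammaC; apply: leq_trans (card_LD_extension LD_C _).
  exact/gammaDLD_le/LD_extension_DLD.
by rewrite uphalf_gt0 -gammaC.
Qed.

End Codes.

Section IncidenceGraph.
Variables (n : nat) (F : {set {set 'I_n}}).

Definition incidence_vertex : finType := ('I_n + {S : {set 'I_n} | S \in F})%type.
Local Notation V := incidence_vertex.

Definition incidence_adj : rel V := fun x y =>
  match x, y with
  | inl i, inl j => i != j
  | inl i, inr X | inr X, inl i => i \in val X
  | inr _, inr _ => false
  end.
Local Notation adj := incidence_adj.

Lemma incidence_adj_sym : symmetric adj.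
Proof. by move=> [i|X] [j|Y] //=; rewrite eq_sym. Qed.

Lemma incidence_adj_irr : irreflexive adj.
Proof. by move=> [i|X] //=; rewrite eqxx. Qed.

Lemma card_incidence_vertex : #|V| = n + #|F|.
Proof. by rewrite card_sum card_ord card_sig; congr (_ + _); apply: eq_card. Qed.

Definition points : {set V} := [set inl i | i : 'I_n].

Lemma inl_points i : (inl i : V) \in points.
Proof. exact: imset_f. Qed.

Lemma inr_points X : ((inr X : V) \in points) = false.
Proof. by apply/negbTE/imsetP => -[]. Qed.

Lemma card_points : #|points| = n.
Proof. by rewrite card_imset ?cardsT ?card_ord // => i j []. Qed.

Hypothesis F_nonempty : forall X, X \in F -> X != set0.
Hypothesis F_singletons : forall i, [set i] \in F.

Lemma points_LD : 0 < n -> is_LD adj points.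
Proof.
move=> n_gt0; apply/and3P; split.
- by apply/set0Pn; exists (inl (Ordinal n_gt0)); rewrite inl_points.
- apply/forallP => [[i|X]]; first by rewrite inl_points.
  have /set0Pn [j jX] := F_nonempty (valP X).
  by apply/implyP => _; apply/set0Pn; exists (inl j); rewrite in_Iset /= jX inl_points.
apply/forallP => [[i|X]]; apply/forallP => [[j|Y]]; rewrite ?inl_points ?andbF //=.
rewrite !inr_points /=; apply/implyP; apply: contra_neq => IXY; congr inr.
apply/val_inj/setP => j; have := congr1 (fun I : {set V} => (inl j : V) \in I) IXY.
by rewrite /= !in_Iset /= inl_points !andbT !orbF.
Qed.

Lemma LD_card_ge C : is_LD adj C -> n <= #|C|.
Proof.
case/and3P => _ /forallP dom _.
(* The vertex [set i] is adjacent only to the point [inl i]. *)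
pose single i : {S | S \in F} := exist _ [set i] (F_singletons i).
pose pick i : V := if (inr (single i) : V) \in C then inr (single i) else inl i.
have pickC i : pick i \in C.
  rewrite /pick; case: ifP => // notC.
  case/set0Pn: (implyP (dom _) (negbT notC)) => -[j|Y]; rewrite in_Iset /=.
    by rewrite inE orbF => /andP [/eqP <-].
  by case/andP => /eqP ->; rewrite notC.
have pick_inj : injective pick.
  move=> i j; rewrite /pick; case: ifP; case: ifP => // _ _; last by case.
  by case=> /set1_inj.
rewrite -[n]card_ord -cardsT -(card_imset _ pick_inj); apply/subset_leq_card/subsetP.
by move=> _ /imsetP [i _ ->].
Qed.

Lemma gammaLD_incidence : 0 < n -> gammaLD adj = n.
Proof.
move=> n_gt0; apply/eqP; rewrite eqn_leq -{1}card_points gammaLD_le ?points_LD //=.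
by rewrite mincard_ge ?card_incidence_vertex ?leq_addr // => C; exact: LD_card_ge.
Qed.

Lemma DLD_sep (D : {set V}) u v : is_DLD adj D -> u \notin D -> v \notin D -> u != v ->
  ~~ (Iset adj D u \subset Iset adj D v).
Proof.
case/and3P => _ _ /forallP sep uD vD uv.
by apply: (implyP (forallP (sep u) v)); rewrite uD vD uv.
Qed.

Lemma Iset_inl_sup (D : {set V}) i : points :&: D \subset Iset adj D (inl i).
Proof.
apply/subsetP => x; rewrite in_Iset inE => /andP [/imsetP [j _ ->] ->].
by rewrite andbT /=; case: (eqVneq i j) => [->|]; rewrite ?eqxx ?orbT.
Qed.

Lemma Iset_inr_sub (D : {set V}) X :
  inr X \notin D -> Iset adj D (inr X) \subset points :&: D.
Proof.
move=> XD; apply/subsetP => -[j|Y]; rewrite in_Iset inE.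
  by rewrite inl_points => /andP [_ ->].
by rewrite /= => /andP [/eqP [->]]; rewrite (negbTE XD).
Qed.

Lemma Iset_inrS (D : {set V}) (X Y : {S | S \in F}) :
  inr X \notin D -> val X \subset val Y -> Iset adj D (inr X) \subset Iset adj D (inr Y).
Proof.
move=> XD XY; apply/subsetP => -[j|Z]; rewrite !in_Iset /=.
  by rewrite !orbF => /andP [/(subsetP XY) -> ->].
by case/andP => /eqP [->]; rewrite (negbTE XD).
Qed.

Lemma DLD_compl_points (D : {set V}) i :
  is_DLD adj D -> inl i \notin D -> ~: D \subset points.
Proof.
move=> DLD_D iD; apply/subsetP => -[j|X]; rewrite inE ?inl_points // => XD.
case/negP: (DLD_sep DLD_D XD iD isT).
exact: subset_trans (Iset_inr_sub XD) (Iset_inl_sup D i).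
Qed.

Lemma DLD_compl_antichain (D : {set V}) :
  is_DLD adj D -> antichain [set val X | X in [set X | (inr X : V) \notin D]].
Proof.
move=> DLD_D _ _ /imsetP [X + ->] /imsetP [Y + ->]; rewrite !inE => XD YD XY.
apply/eqP; apply: contraTT (Iset_inrS XD XY) => neqXY.
by apply: DLD_sep; rewrite //; apply: contra neqXY => /eqP [->].
Qed.

Definition antichain_code (A0 : {set {set 'I_n}}) : {set V} :=
  ~: [set inr X | X in [set X : {S | S \in F} | val X \in A0]].

Lemma inl_antichain_code (A0 : {set {set 'I_n}}) i : (inl i : V) \in antichain_code A0.
Proof. by rewrite inE; apply/imsetP => -[]. Qed.

Lemma inr_antichain_code (A0 : {set {set 'I_n}}) X :
  ((inr X : V) \in antichain_code A0) = (val X \notin A0).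
Proof. by rewrite inE mem_imset ?inE //; exact: inr_inj. Qed.

Lemma antichain_code_DLD (A0 : {set {set 'I_n}}) :
  0 < n -> antichain A0 -> is_DLD adj (antichain_code A0).
Proof.
move=> n_gt0 antiA0; apply/and3P; split.
- by apply/set0Pn; exists (inl (Ordinal n_gt0)); rewrite inl_antichain_code.
- apply/forallP => -[i|X]; first by rewrite inl_antichain_code.
  have /set0Pn [j jX] := F_nonempty (valP X); apply/implyP => _.
  by apply/set0Pn; exists (inl j); rewrite in_Iset /= jX inl_antichain_code.
apply/forallP => -[i|X]; apply/forallP => -[j|Y]; rewrite ?inl_antichain_code ?andbF //=.
rewrite !inr_antichain_code !negbK; apply/implyP => /and3P [XA0 YA0 neqXY].
have /subsetPn [j jX jY] : ~~ (val X \subset val Y).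
  by apply: contra neqXY => /(antiA0 _ _ XA0 YA0) XY; apply/eqP; congr inr; exact: val_inj.
apply/subsetPn; exists (inl j); first by rewrite in_Iset /= jX inl_antichain_code.
by rewrite in_Iset /= (negbTE jY).
Qed.

Lemma card_antichain_code (A0 : {set {set 'I_n}}) :
  A0 \subset F -> #|antichain_code A0| = n + #|F| - #|A0|.
Proof.
move=> sA0F; rewrite cardsCs setCK card_incidence_vertex card_imset; last exact: inr_inj.
congr (_ - _); rewrite -(card_imset _ val_inj); apply: eq_card => S.
apply/imsetP/idP => [[X + ->]|SA0]; first by rewrite inE.
by exists (exist _ S (subsetP sA0F _ SA0)); rewrite ?inE.
Qed.

Variable w : nat.
Hypothesis antichain_le_w :
  forall A : {set {set 'I_n}}, A \subset F -> antichain A -> #|A| <= w.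
Hypothesis n_le_w : n <= w.

Lemma DLD_card_ge (D : {set V}) : is_DLD adj D -> n + #|F| - w <= #|D|.
Proof.
move=> DLD_D; suff : #|~: D| <= w by rewrite -card_incidence_vertex -(cardsC D); lia.
have [i iD|allD] := pickP [pred i | (inl i : V) \notin D].
  apply: (leq_trans _ n_le_w); rewrite -card_points.
  exact/subset_leq_card/(DLD_compl_points DLD_D iD).
set Xs := [set X | (inr X : V) \notin D].
have -> : ~: D = inr @: Xs.
  apply/setP => -[i|X]; rewrite inE; last by rewrite mem_imset ?inE //; exact: inr_inj.
  by have := allD i; rewrite /= => /negbFE ->; apply/esym/imsetP => -[].
rewrite card_imset; last exact: inr_inj.
rewrite -(card_imset _ val_inj); apply: antichain_le_w; last exact: DLD_compl_antichain.
by apply/subsetP => _ /imsetP [X _ ->]; exact: valP.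
Qed.

Lemma gammaDLD_incidence (A0 : {set {set 'I_n}}) : 0 < n ->
  A0 \subset F -> antichain A0 -> #|A0| = w -> gammaDLD adj = n + #|F| - w.
Proof.
move=> n_gt0 sA0F antiA0 cardA0; apply/eqP; rewrite eqn_leq.
rewrite -{1}cardA0 -card_antichain_code // gammaDLD_le ?antichain_code_DLD //=.
by rewrite mincard_ge ?card_incidence_vertex ?leq_subr // => D; exact: DLD_card_ge.
Qed.

End IncidenceGraph.

Definition realizable (a b : nat) : Prop :=
  exists (T : finType) (e : rel T),
    [/\ symmetric e, irreflexive e, gammaLD e = a & gammaDLD e = b].

Lemma incidence_realizable n (F A0 : {set {set 'I_n}}) :
  0 < n -> (forall X, X \in F -> X != set0) -> (forall i, [set i] \in F) ->
  (forall A : {set {set 'I_n}}, A \subset F -> antichain A -> #|A| <= #|A0|) -> n <= #|A0| ->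
  A0 \subset F -> antichain A0 -> realizable n (n + #|F| - #|A0|).
Proof.
move=> n_gt0 F0 F1 maxA0 n_le_A0 sA0F antiA0.
exists (incidence_vertex F), (@incidence_adj n F); split.
- exact: incidence_adj_sym.
- exact: incidence_adj_irr.
- exact: gammaLD_incidence F0 F1 n_gt0.
- exact: (gammaDLD_incidence F0 maxA0 n_le_A0 n_gt0 sA0F antiA0).
Qed.

Lemma realizable_bounds a b : 0 < a -> realizable a b ->
  a <= b /\ b - a <= 2 ^ a - 1 - 'C(a, uphalf a).
Proof.
move=> a_gt0 [T [e [_ _ gLD gDLD]]].
have T_gt0 : 0 < #|T| by rewrite -gLD in a_gt0; exact: leq_trans a_gt0 (mincard_le_card _).
split; first by rewrite -gLD -gDLD gammaLD_le_gammaDLD.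
have := gammaDLD_le_gammaLD (e := e); rewrite gLD gDLD => /(_ a_gt0); lia.
Qed.

Lemma exists_card_between (T : finType) (G0 G1 : {set T}) s :
  G0 \subset G1 -> #|G0| <= s <= #|G1| ->
  exists F : {set T}, [/\ G0 \subset F, F \subset G1 & #|F| = s].
Proof.
move=> sG01 /andP [le0 le1].
have /card_gt0P [S] : 0 < #|[set S : {set T} | S \subset G1 :\: G0 & #|S| == s - #|G0|]|.
  by rewrite cards_draws bin_gt0 cardsD (setIidPr sG01); lia.
rewrite inE subsetD => /andP [/andP [sSG1 disSG0] /eqP cardS].
exists (G0 :|: S); split; first exact: subsetUl.
  by rewrite subUset sG01.
by rewrite cardsU setIC (disjoint_setI0 disSG0) cards0 cardS; lia.
Qed.

Definition singletons n : {set {set 'I_n}} := [set [set i] | i : 'I_n].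

Lemma card_singletons n : #|singletons n| = n.
Proof. by rewrite card_imset ?cardsT ?card_ord //; exact: set1_inj. Qed.

Lemma antichain_singletons n : antichain (singletons n).
Proof. by move=> _ _ /imsetP [i _ ->] /imsetP [j _ ->]; rewrite sub1set => /set1P ->. Qed.

Lemma antichain_card_le_star (T : finType) (A : {set {set T}}) (x0 : T) (g : {set T} -> T) :
  antichain A -> {in A, forall X, X = [set g X] \/ X = [set x0; g X]} -> #|A| <= #|T|.
Proof.
move=> antiA star; rewrite -(card_in_imset (f := g)) ?max_card // => X Y XA YA gXY.
have sub1 x : [set x] \subset [set x0; x] by rewrite sub1set !inE eqxx orbT.
case: (star X XA) (star Y YA) => EX [] EY; try by rewrite EX EY gXY.
  by apply: antiA; rewrite // EX EY gXY sub1.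
by apply/esym/antiA; rewrite // EX EY gXY sub1.
Qed.

Lemma realizable_small a d : 0 < a -> d < a -> realizable a (a + d).
Proof.
move=> a_gt0 d_lt_a; pose i0 : 'I_a := Ordinal a_gt0.
pose stars := [set [set i0; j] | j in [set~ i0]].
pose g (X : {set 'I_a}) := odflt i0 [pick j in X | j != i0].
have starP X : X \in singletons a :|: stars -> X = [set g X] \/ X = [set i0; g X].
  rewrite /g; case/setUP => /imsetP [j jP ->].
    left; case: pickP => [k /andP [/set1P -> //]|/(_ j)]; rewrite !inE eqxx /=.
    by move/negbFE/eqP ->.
  right; rewrite !inE in jP; case: pickP => [k|/(_ j)]; rewrite !inE ?eqxx ?orbT ?jP //.
  by case/andP => /orP [] /eqP ->; rewrite ?eqxx.
have card_stars : #|stars| = a - 1.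
  rewrite card_in_imset ?cardsC1 ?card_ord ?subn1 // => x y; rewrite !inE => x_ne0 y_ne0 E.
  by have := set22 i0 x; rewrite E !inE (negbTE x_ne0) => /eqP.
have disj : singletons a :&: stars = set0.
  apply/setP => X; rewrite !inE; apply/negbTE/andP => -[/imsetP [i _ ->] /imsetP [j]].
  rewrite !inE => j_ne0 /(congr1 (fun Y : {set 'I_a} => #|Y|)).
  by rewrite cards1 cards2 eq_sym j_ne0.
have [F [sSF sFG cardF]] : exists F : {set {set 'I_a}},
    [/\ singletons a \subset F, F \subset singletons a :|: stars & #|F| = a + d].
  apply: exists_card_between; first exact: subsetUl.
  by rewrite cardsU disj cards0 card_singletons card_stars leq_addr /=; lia.
have := @incidence_realizable a F (singletons a) a_gt0.
rewrite card_singletons cardF addKn; apply => //.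
- move=> X /(subsetP sFG) /starP [] ->; apply/set0Pn; exists (g X); by rewrite !inE eqxx ?orbT.
- by move=> i; apply: (subsetP sSF); exact: imset_f.
- move=> A sAF antiA; rewrite -[X in _ <= X]card_ord.
  apply: (antichain_card_le_star antiA) => X XA.
  exact/starP/(subsetP sFG)/(subsetP sAF).
- exact: antichain_singletons.
Qed.

Lemma realizable_large a d : 0 < a -> a <= d <= 2 ^ a - 1 - 'C(a, uphalf a) ->
  realizable a (a + d).
Proof.
move=> a_gt0 /andP [a_le_d d_le]; set m := 'C(a, uphalf a).
pose level := [set X : {set 'I_a} | #|X| == uphalf a].
have card_level : #|level| = m by rewrite card_draws card_ord.
have a_le_m : a <= m by rewrite -[X in X <= _]bin1 leq_bin_uphalf.
have sub_nonempty : singletons a :|: level \subset [set~ set0].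
  apply/subsetP => X; rewrite !inE => /orP [/imsetP [i _ ->]|/eqP cardX].
    by apply/set0Pn; exists i; rewrite inE.
  by rewrite -card_gt0 cardX uphalf_gt0.
have [F [sGF sFT cardF]] : exists F : {set {set 'I_a}},
    [/\ singletons a :|: level \subset F, F \subset [set~ set0] & #|F| = m + d].
  apply: exists_card_between => //.
  rewrite cardsC1 -cardsT -powersetT card_powerset cardsT card_ord.
  by rewrite cardsU card_singletons card_level; move: d_le; rewrite -/m; lia.
have := @incidence_realizable a F level a_gt0.
rewrite card_level cardF addnCA addKn; apply => //.
- by move=> X /(subsetP sFT); rewrite !inE.
- by move=> i; apply/(subsetP sGF)/setUP; left; exact: imset_f.
- by move=> A _ /sperner.
- exact: subset_trans (subsetUr _ _) sGF.
- move=> X Y; rewrite !inE => /eqP cX /eqP cY sXY.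
  by apply/eqP; rewrite eqEcard sXY cX cY leqnn.
Qed.

Theorem mainTheorem20 (a b : nat) (ha : 0 < a) (hb : 0 < b) :
  (exists (T : finType) (e : rel T),
      [/\ symmetric e, irreflexive e, gammaLD e = a & gammaDLD e = b])
  <-> (a <= b /\ b - a <= 2 ^ a - 1 - 'C(a, uphalf a)).
Proof.
split; first exact: realizable_bounds.
case=> a_le_b bound; rewrite -(subnKC a_le_b).
have [small|large] := ltnP (b - a) a; first exact: realizable_small.
by apply: realizable_large; rewrite // large.
Qed.
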